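(* Fix $A\in\mathbb R$, $T>0$ and $b\ge0$. There is a constant $C=C(A,b,T)$, not depending on $\epsilon$, such that for all sufficiently small $\epsilon>0$, all $t\in[0,\epsilon^{-2}T]$ and all $x,y\in\mathbb Z_{\ge0}$, $$\mathbf p_t^R(x,y)\le C\,(1\wedge t^{-1/2})\,e^{-b|x-y|(1\wedge t^{-1/2})}.$$
   Context: Let $p_t(x)$, $x\in\mathbb Z$, denote the whole-line semi-discrete heat kernel, i.e. the solution of $\partial_tp_t(x)=\frac12\Delta p_t(x)$, $p_0(x)=1_{\{x=0\}}$, where $\Delta f(x)=f(x+1)+f(x-1)-2f(x)$. For $\epsilon>0$ let $\mu_A=1-A\epsilon$. The half-line Robin heat kernel is, for $t\ge0$ and $x,y\in\mathbb Z_{\ge0}$, $$\mathbf p_t^R(x,y)=p_t(x-y)+\mu_Ap_t(x+y+1)+(1-\mu_A^{-2})\sum_{z=2}^\infty p_t(x+y+z)\mu_A^z;$$ it is the fundamental solution of $\partial_t\mathbf p=\frac12\Delta\mathbf p$ on $\mathbb Z_{\ge0}$ with boundary condition $\mathbf p_t^R(-1,y)=\mu_A\mathbf p_t^R(0,y)$. *)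

From Stdlib Require Import Reals Lra Lia ZArith Classical ClassicalEpsilon.
Open Scope R_scope.

(* Value of a convergent real series sum_{n>=0} f n (the unique l with
   infinite_sum f l); defaults to 0 if the series does not converge. *)
Definition series (f : nat -> R) : R :=
  match excluded_middle_informative (exists l, infinite_sum f l) with
  | left H => proj1_sig (constructive_indefinite_description _ H)
  | right _ => 0
  end.

(* Whole-line semi-discrete heat kernel p_t(x), the solution of
   d/dt p = 1/2 Delta p, p_0 = 1_{x=0}:
   p_t(x) = e^{-t} I_{|x|}(t) = e^{-t} sum_k (t/2)^{2k+|x|} / (k! (k+|x|)!). *)
Definition heat_kernel (t : R) (x : Z) : R :=
  let m := Z.abs_nat x in
  exp (- t) * series (fun k => (t / 2) ^ (2 * k + m) / (INR (fact k) * INR (fact (k + m)))).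

Definition muA (A eps : R) : R := 1 - A * eps.

Definition robin_kernel (A eps t : R) (x y : nat) : R :=
  let mu := muA A eps in
  heat_kernel t (Z.of_nat x - Z.of_nat y)
  + mu * heat_kernel t (Z.of_nat x + Z.of_nat y + 1)
  + (1 - / mu ^ 2) *
    series (fun n => heat_kernel t (Z.of_nat x + Z.of_nat y + Z.of_nat (n + 2))
                     * mu ^ (n + 2)).

(* 1 /\ t^{-1/2}, with the convention t^{-1/2} = +infinity at t = 0. *)
Definition min1_invsqrt (t : R) : R :=
  if Rle_dec t 1 then 1 else / sqrt t.

(* [p_t(m)] is the law at [m] of the difference of two independent
   Poisson(t/2) variables: [p_t(m) = sum_k P(k) P(k+m)].  Tilting the two Poisson
   laws by [e^(-l)] and [e^l] pulls out [e^(-l m)] at the cost of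
   [exp ((t/2)(e^l + e^(-l) - 2)) <= exp ((t/2) l^2 e^l)] and of the maximum of a
   Poisson mass function, which is [O(r^(-1/2))].  With [l = b (1 /\ t^(-1/2))] this
   gives [p_t(z) <= C (1 /\ t^(-1/2)) e^(-b |z| (1 /\ t^(-1/2)))] for every [b >= 0].

   The series term is
   nonpositive when [A >= 0].  When [A < 0], spend an extra decay rate
   [c = (2|A|+1) sqrt T] on it: since [1 /\ t^(-1/2) >= eps / sqrt T] for
   [t <= T eps^(-2)], it becomes a geometric series of ratio at most
   [e^(-(|A|+1) eps)], whose sum [O(1/eps)] is compensated by the prefactor
   [1 - mu_A^(-2) = O(eps)]. *)

From Stdlib Require Import Reals Lra Lia ZArith ClassicalEpsilon.
Open Scope R_scope.

Lemma infinite_sum_le (f : nat -> R) (l U : R) :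
  infinite_sum f l -> (forall N, sum_f_R0 f N <= U) -> l <= U.
Proof.
  intros hf hU. apply (Rle_cv_lim hU hf).
  intros e he. exists 0%nat. intros n _. rewrite Rdist_eq. exact he.
Qed.

Lemma infinite_sum_ge (f : nat -> R) (l U : R) :
  infinite_sum f l -> (forall N, U <= sum_f_R0 f N) -> U <= l.
Proof.
  intros hf hU. apply (Rle_cv_lim hU); [| exact hf].
  intros e he. exists 0%nat. intros n _. rewrite Rdist_eq. exact he.
Qed.

(* [0 <= U] covers the divergent case, where [series f = 0]. *)
Lemma series_le (f : nat -> R) (U : R) :
  (forall N, sum_f_R0 f N <= U) -> 0 <= U -> series f <= U.
Proof.
  intros hU hU0. unfold series.
  destruct excluded_middle_informative as [hcv | _]; [| exact hU0].
  destruct constructive_indefinite_description as [l hl]. exact (infinite_sum_le f l U hl hU).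
Qed.

Lemma series_ge0 (f : nat -> R) : (forall n, 0 <= f n) -> 0 <= series f.
Proof.
  intros hf. unfold series.
  destruct excluded_middle_informative as [hcv | _]; [| lra].
  destruct constructive_indefinite_description as [l hl].
  apply (infinite_sum_ge f l 0 hl). intros N. exact (cond_pos_sum f N hf).
Qed.

Lemma sum_f_R0_ge_last (f : nat -> R) (N : nat) :
  (forall n, 0 <= f n) -> f N <= sum_f_R0 f N.
Proof.
  intros hf. destruct N as [| N]; simpl; [lra |].
  pose proof (cond_pos_sum f N hf). lra.
Qed.

Lemma sum_f_R0_shift_le (f : nat -> R) (a L : nat) :
  (forall n, 0 <= f n) -> sum_f_R0 (fun i => f (a + i)%nat) L <= sum_f_R0 f (a + L).
Proof.
  intros hf. induction L as [| L IH]; simpl.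
  - rewrite Nat.add_0_r. apply sum_f_R0_ge_last. exact hf.
  - rewrite Nat.add_succ_r. simpl. lra.
Qed.

Lemma exp_le_exp (x y : R) : x <= y -> exp x <= exp y.
Proof. intros [hlt | ->]; [left; apply exp_increasing; exact hlt | lra]. Qed.

Lemma exp_pow (a : R) (n : nat) : exp a ^ n = exp (a * INR n).
Proof.
  induction n as [| n IH]; [simpl; rewrite Rmult_0_r, exp_0; reflexivity |].
  rewrite S_INR, <- tech_pow_Rmult, IH, <- exp_plus. f_equal. ring.
Qed.

Lemma exp_partial_sum_le (x : R) (N : nat) :
  0 <= x -> sum_f_R0 (fun i => x ^ i / INR (fact i)) N <= exp x.
Proof.
  intros hx. unfold exp. destruct (exist_exp x) as [l hl]; simpl.
  replace (sum_f_R0 (fun i => x ^ i / INR (fact i)) N)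
    with (sum_f_R0 (fun i => / INR (fact i) * x ^ i) N)
    by (apply sum_eq; intros; unfold Rdiv; ring).
  apply sum_incr; [exact hl |]. intros n. apply Rmult_le_pos.
  - left. apply Rinv_0_lt_compat, INR_fact_lt_0.
  - apply pow_le. exact hx.
Qed.

Lemma pow_le_pow_le1 (q : R) (i n : nat) : 0 <= q <= 1 -> (i <= n)%nat -> q ^ n <= q ^ i.
Proof.
  intros hq hin. replace n with (i + (n - i))%nat by lia. rewrite pow_add.
  assert (0 <= q ^ i) by (apply pow_le; lra).
  assert (q ^ (n - i) <= 1) by (rewrite <- (pow1 (n - i)); apply pow_incr; lra).
  nra.
Qed.

Lemma pow_one_sub_ge (x : R) (n : nat) : 0 <= x <= 1 -> 1 - INR n * x <= (1 - x) ^ n.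
Proof.
  intros hx. induction n as [| n IH]; [simpl; lra |].
  rewrite S_INR, <- tech_pow_Rmult. pose proof (pos_INR n).
  assert (0 <= INR n * x * x) by (apply Rmult_le_pos; [apply Rmult_le_pos |]; lra).
  apply Rle_trans with ((1 - x) * (1 - INR n * x)); [nra |].
  apply Rmult_le_compat_l; lra.
Qed.

Lemma nat_floor (x : R) : 0 <= x -> exists L : nat, INR L <= x < INR L + 1.
Proof.
  intros hx. destruct (base_Int_part x) as [hle hgt].
  assert (hz : (0 <= Int_part x)%Z).
  { apply le_IZR. destruct (Z_lt_le_dec (Int_part x) 0) as [hneg | hpos].
    - apply Z.lt_le_pred in hneg. apply IZR_le in hneg. simpl in hneg. lra.
    - apply IZR_le in hpos. exact hpos. }
  exists (Z.to_nat (Int_part x)). rewrite INR_IZR_INZ, Z2Nat.id by exact hz. lra.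
Qed.

(** * The Poisson mass function *)

Definition poisson (r : R) (j : nat) : R := exp (- r) * r ^ j / INR (fact j).

Lemma poisson_ge0 (r : R) (j : nat) : 0 <= r -> 0 <= poisson r j.
Proof.
  intros hr. unfold poisson. apply Rmult_le_pos; [apply Rmult_le_pos |].
  - left. apply exp_pos.
  - apply pow_le. exact hr.
  - left. apply Rinv_0_lt_compat, INR_fact_lt_0.
Qed.

Lemma poisson_partial_sum_le1 (r : R) (N : nat) : 0 <= r -> sum_f_R0 (poisson r) N <= 1.
Proof.
  intros hr. unfold poisson.
  replace (sum_f_R0 (fun j => exp (- r) * r ^ j / INR (fact j)) N)
    with (exp (- r) * sum_f_R0 (fun j => r ^ j / INR (fact j)) N)
    by (rewrite scal_sum; apply sum_eq; intros; unfold Rdiv; ring).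
  replace 1 with (exp (- r) * exp r) by (rewrite <- exp_plus, Rplus_opp_l, exp_0; reflexivity).
  apply Rmult_le_compat_l; [left; apply exp_pos | apply exp_partial_sum_le; exact hr].
Qed.

Lemma poisson_le1 (r : R) (j : nat) : 0 <= r -> poisson r j <= 1.
Proof.
  intros hr. apply Rle_trans with (sum_f_R0 (poisson r) j).
  - apply sum_f_R0_ge_last. intros n. apply poisson_ge0. exact hr.
  - apply poisson_partial_sum_le1. exact hr.
Qed.

Lemma poisson_S (r : R) (j : nat) : poisson r (S j) = poisson r j * (r / INR (S j)).
Proof.
  unfold poisson. rewrite fact_simpl, mult_INR, <- tech_pow_Rmult.
  pose proof (INR_fact_neq_0 j). pose proof (not_0_INR (S j) (Nat.neq_succ_0 j)).
  field. split; assumption.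
Qed.

Lemma poisson_window_le1 (r v : R) (a L : nat) :
  0 <= r -> (forall i, (i <= L)%nat -> v <= poisson r (a + i)) -> v * INR (S L) <= 1.
Proof.
  intros hr hv. rewrite <- sum_cte.
  apply Rle_trans with (sum_f_R0 (fun i => poisson r (a + i)) L).
  - apply sum_Rle. intros i hi. exact (hv i hi).
  - eapply Rle_trans; [apply sum_f_R0_shift_le | apply poisson_partial_sum_le1; exact hr].
    intros n. apply poisson_ge0. exact hr.
Qed.

Lemma ratio_chain_ge (f : nat -> R) (g : nat -> nat) (q : R) (n : nat) :
  0 <= q -> (forall i, (i < n)%nat -> q * f (g i) <= f (g (S i))) ->
  forall i, (i <= n)%nat -> q ^ i * f (g 0%nat) <= f (g i).
Proof.
  intros hq hstep i. induction i as [| i IH]; intros hi; [simpl; lra |].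
  rewrite <- tech_pow_Rmult, Rmult_assoc.
  apply Rle_trans with (q * f (g i)); [apply Rmult_le_compat_l; [exact hq | apply IH; lia] |].
  apply hstep. lia.
Qed.

Lemma one_sub_div_bounds (x r : R) : 0 < r -> 0 <= x <= r -> 0 <= 1 - x / r <= 1.
Proof.
  intros hr hx.
  assert (0 <= x / r <= 1).
  { split; [apply Rmult_le_pos; [lra | left; apply Rinv_0_lt_compat; lra] |].
    apply Rmult_le_reg_r with r; [exact hr |].
    unfold Rdiv. rewrite Rmult_assoc, Rinv_l; lra. }
  lra.
Qed.

Lemma poisson_ge_up (r : R) (j L : nat) : 0 < r -> INR L <= r -> INR j < r ->
  forall i, (i <= L)%nat -> (1 - INR L / r) ^ i * poisson r j <= poisson r (j + i).
Proof.
  intros hr hLr hj. set (q := 1 - INR L / r). pose proof (pos_INR L).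
  assert (hq : 0 <= q <= 1) by (apply one_sub_div_bounds; lra).
  intros i hi. rewrite <- (Nat.add_0_r j) at 1.
  apply (ratio_chain_ge (poisson r) (fun i => (j + i)%nat) q L (proj1 hq)); [| exact hi].
  intros k hk. cbv beta. rewrite Nat.add_succ_r, poisson_S, Rmult_comm.
  apply Rmult_le_compat_l; [apply poisson_ge0; lra |].
  assert (hk' : INR (S (j + k)) <= INR j + INR L) by (rewrite <- plus_INR; apply le_INR; lia).
  pose proof (lt_0_INR (S (j + k)) (Nat.lt_0_succ _)).
  apply Rmult_le_reg_r with (INR (S (j + k))); [assumption |].
  unfold Rdiv. rewrite Rmult_assoc, Rinv_l by lra.
  assert (q * r = r - INR L) by (unfold q; field; lra).
  assert (0 <= q * (r + INR L - INR (S (j + k)))) by (apply Rmult_le_pos; lra).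
  assert (q * INR L <= INR L) by nra.
  lra.
Qed.

Lemma poisson_ge_down (r : R) (j L : nat) : 0 < r -> INR L <= r -> r <= INR j ->
  forall i, (i <= L)%nat -> (1 - INR L / r) ^ i * poisson r j <= poisson r (j - i).
Proof.
  intros hr hLr hj. set (q := 1 - INR L / r). pose proof (pos_INR L).
  assert (hq : 0 <= q <= 1) by (apply one_sub_div_bounds; lra).
  assert (hLj : (L <= j)%nat) by (apply INR_le; lra).
  intros i hi. rewrite <- (Nat.sub_0_r j) at 1.
  apply (ratio_chain_ge (poisson r) (fun i => (j - i)%nat) q L (proj1 hq)); [| exact hi].
  intros k hk. cbv beta. replace (j - k)%nat with (S (j - S k)) by lia.
  rewrite poisson_S. set (c := (j - S k)%nat).
  assert (hc : r - INR L <= INR (S c)).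
  { apply Rle_trans with (INR j - INR L); [lra |].
    rewrite <- minus_INR by exact hLj. apply le_INR. unfold c. lia. }
  pose proof (lt_0_INR (S c) (Nat.lt_0_succ _)).
  replace (q * (poisson r c * (r / INR (S c))))
    with (poisson r c * ((r - INR L) / INR (S c))) by (unfold q; field; lra).
  rewrite <- (Rmult_1_r (poisson r c)) at 2.
  apply Rmult_le_compat_l; [apply poisson_ge0; lra |].
  apply Rmult_le_reg_r with (INR (S c)); [assumption |].
  unfold Rdiv. rewrite Rmult_assoc, Rinv_l by lra. lra.
Qed.

Lemma poisson_window_ge (r : R) (j L : nat) : 0 < r -> INR L <= r ->
  exists a, forall i, (i <= L)%nat -> poisson r j * (1 - INR L / r) ^ L <= poisson r (a + i).
Proof.
  intros hr hLr. pose proof (pos_INR L).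
  assert (hq : 0 <= 1 - INR L / r <= 1) by (apply one_sub_div_bounds; lra).
  assert (hpj : 0 <= poisson r j) by (apply poisson_ge0; lra).
  destruct (Rlt_or_le (INR j) r) as [hj | hj].
  - exists j. intros i hi.
    eapply Rle_trans; [| apply (poisson_ge_up r j L hr hLr hj i hi)].
    rewrite Rmult_comm. apply Rmult_le_compat_r; [exact hpj | apply pow_le_pow_le1; assumption].
  - assert (hLj : (L <= j)%nat) by (apply INR_le; lra).
    exists (j - L)%nat. intros i hi.
    replace (j - L + i)%nat with (j - (L - i))%nat by lia.
    eapply Rle_trans; [| apply (poisson_ge_down r j L hr hLr hj); lia].
    rewrite Rmult_comm.
    apply Rmult_le_compat_r; [exact hpj | apply pow_le_pow_le1; [assumption | lia]].
Qed.

(* With [L = floor (sqrt r / 2)], Bernoulli gives [(1 - L/r)^L >= 3/4]: the [L+1]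
   masses of the window are at least [(3/4) P(j)] each and sum to at most 1. *)
Lemma poisson_le_inv_sqrt (r : R) (j : nat) : 0 < r -> poisson r j <= 3 / sqrt r.
Proof.
  intros hr.
  assert (hs : 0 < sqrt r) by (apply sqrt_lt_R0; exact hr).
  assert (hss : sqrt r * sqrt r = r) by (apply sqrt_sqrt; lra).
  destruct (nat_floor (sqrt r / 2)) as [L [hL1 hL2]]; [lra |].
  pose proof (pos_INR L).
  assert (hLL : INR L * INR L <= r / 4) by nra.
  assert (hLr : INR L <= r).
  { destruct L as [| L]; [simpl; lra |].
    assert (1 <= INR (S L)) by (apply (le_INR 1); lia). nra. }
  assert (hqL : 3 / 4 <= (1 - INR L / r) ^ L).
  { pose proof (one_sub_div_bounds (INR L) r hr (conj (pos_INR L) hLr)).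
    eapply Rle_trans; [| apply pow_one_sub_ge; lra].
    assert (INR L * (INR L / r) <= 1 / 4).
    { unfold Rdiv. rewrite <- Rmult_assoc. apply Rmult_le_reg_r with r; [exact hr |].
      rewrite Rmult_assoc, Rinv_l; lra. }
    lra. }
  destruct (poisson_window_ge r j L hr hLr) as [a ha].
  pose proof (poisson_window_le1 r _ a L (Rlt_le _ _ hr) ha) as hwin.
  rewrite S_INR in hwin. pose proof (poisson_ge0 r j (Rlt_le _ _ hr)).
  assert (hmode : poisson r j * (3 / 4) * (INR L + 1) <= 1).
  { eapply Rle_trans; [| exact hwin].
    apply Rmult_le_compat_r; [lra |]. apply Rmult_le_compat_l; lra. }
  apply Rmult_le_reg_r with (sqrt r); [exact hs |].
  unfold Rdiv. rewrite Rmult_assoc, Rinv_l by lra. nra.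
Qed.

(** * The whole-line heat kernel *)

Lemma min1_invsqrt_pos (t : R) : 0 < min1_invsqrt t.
Proof.
  unfold min1_invsqrt. destruct Rle_dec; [lra |].
  apply Rinv_0_lt_compat, sqrt_lt_R0. lra.
Qed.

Lemma min1_invsqrt_le1 (t : R) : min1_invsqrt t <= 1.
Proof.
  unfold min1_invsqrt. destruct Rle_dec as [_ | ht]; [lra |].
  rewrite <- Rinv_1. apply Rinv_le_contravar; [lra |].
  rewrite <- sqrt_1. apply sqrt_le_1_alt. lra.
Qed.

Lemma mul_min1_invsqrt_sq_le1 (t : R) : 0 <= t -> t * min1_invsqrt t ^ 2 <= 1.
Proof.
  intros ht. unfold min1_invsqrt. destruct Rle_dec as [ht1 | ht1]; [lra |].
  assert (0 < sqrt t) by (apply sqrt_lt_R0; lra).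
  rewrite <- (sqrt_sqrt t) at 1 by exact ht. right. field. lra.
Qed.

Lemma poisson_le_min1_invsqrt (t r : R) (j : nat) :
  0 <= t -> t / 2 <= r -> poisson r j <= 3 * sqrt 2 * min1_invsqrt t.
Proof.
  intros ht htr. assert (hs2 : 1 <= sqrt 2) by (rewrite <- sqrt_1; apply sqrt_le_1_alt; lra).
  unfold min1_invsqrt. destruct Rle_dec as [ht1 | ht1].
  - pose proof (poisson_le1 r j ltac:(lra)). lra.
  - assert (hst : 0 < sqrt t) by (apply sqrt_lt_R0; lra).
    eapply Rle_trans; [apply poisson_le_inv_sqrt; lra |].
    apply Rle_trans with (3 / sqrt (t / 2)).
    + apply Rmult_le_compat_l; [lra |]. apply Rinv_le_contravar.
      * apply sqrt_lt_R0. lra.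
      * apply sqrt_le_1_alt. exact htr.
    + rewrite sqrt_div_alt by lra. right. field. lra.
Qed.

Lemma exp_add_exp_opp_sub2_le (l : R) : 0 <= l -> exp l + exp (- l) - 2 <= l ^ 2 * exp l.
Proof.
  intros hl. set (u := l / 2).
  assert (hsq : exp l + exp (- l) - 2 = (exp u - exp (- u)) ^ 2).
  { replace l with (u + u) by (unfold u; field).
    replace (- (u + u)) with (- u + - u) by ring.
    rewrite !exp_plus. assert (exp u * exp (- u) = 1)
      by (rewrite <- exp_plus, Rplus_opp_r, exp_0; reflexivity).
    nra. }
  assert (hdiff : 0 <= exp u - exp (- u) <= l * exp u).
  { assert (exp (- l) <= 1) by (rewrite <- exp_0; apply exp_le_exp; lra).
    pose proof (exp_ineq1_le (- l)). pose proof (exp_pos u).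
    replace (exp (- u)) with (exp u * exp (- l))
      by (rewrite <- exp_plus; f_equal; unfold u; field).
    split; nra. }
  rewrite hsq. replace (l ^ 2 * exp l) with ((l * exp u) ^ 2)
    by (replace l with (u + u) at 3 by (unfold u; field); rewrite exp_plus; ring).
  apply pow_incr. exact hdiff.
Qed.

Lemma poisson_tilt (s l : R) (j : nat) :
  poisson (s * exp l) j = exp (s * (1 - exp l) + l * INR j) * poisson s j.
Proof.
  assert (e : exp (s * (1 - exp l) + l * INR j) * exp (- s) = exp (- (s * exp l)) * exp (l * INR j))
    by (rewrite <- !exp_plus; f_equal; ring).
  unfold poisson. rewrite Rpow_mult_distr, exp_pow.
  transitivity (exp (s * (1 - exp l) + l * INR j) * exp (- s) * s ^ j / INR (fact j));
    [rewrite e | ]; unfold Rdiv; ring.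
Qed.

Lemma poisson_pair_tilt (s l : R) (k m : nat) :
  poisson s k * poisson s (k + m)
  = exp (s * (exp l + exp (- l) - 2) - l * INR m)
    * (poisson (s * exp (- l)) k * poisson (s * exp l) (k + m)).
Proof.
  rewrite !poisson_tilt, plus_INR.
  transitivity (exp (s * (exp l + exp (- l) - 2) - l * INR m)
    * exp (s * (1 - exp (- l)) + - l * INR k)
    * exp (s * (1 - exp l) + l * (INR k + INR m)) * (poisson s k * poisson s (k + m))).
  - rewrite <- !exp_plus.
    replace (s * (exp l + exp (- l) - 2) - l * INR m + (s * (1 - exp (- l)) + - l * INR k)
             + (s * (1 - exp l) + l * (INR k + INR m))) with 0 by ring.
    rewrite exp_0. ring.
  - ring.
Qed.

Lemma poisson_pair_partial_sum_le (s l P : R) (m N : nat) :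
  0 <= s -> (forall j, poisson (s * exp l) j <= P) ->
  sum_f_R0 (fun k => poisson s k * poisson s (k + m)) N
  <= P * exp (s * (exp l + exp (- l) - 2) - l * INR m).
Proof.
  intros hs hP. set (w := exp (s * (exp l + exp (- l) - 2) - l * INR m)).
  assert (hs' : 0 <= s * exp (- l)) by (apply Rmult_le_pos; [exact hs | left; apply exp_pos]).
  assert (hPw : 0 <= P * w).
  { apply Rmult_le_pos; [| left; apply exp_pos].
    eapply Rle_trans; [apply poisson_ge0 | apply (hP 0%nat)].
    apply Rmult_le_pos; [exact hs | left; apply exp_pos]. }
  apply Rle_trans with (sum_f_R0 (fun k => P * w * poisson (s * exp (- l)) k) N).
  - apply sum_Rle. intros k _. rewrite (poisson_pair_tilt s l). fold w.
    replace (P * w * poisson (s * exp (- l)) k) with (w * (poisson (s * exp (- l)) k * P)) by ring.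
    apply Rmult_le_compat_l; [left; apply exp_pos |].
    apply Rmult_le_compat_l; [apply poisson_ge0; exact hs' | apply hP].
  - replace (sum_f_R0 (fun k => P * w * poisson (s * exp (- l)) k) N)
      with (P * w * sum_f_R0 (poisson (s * exp (- l))) N)
      by (rewrite scal_sum; apply sum_eq; intros; ring).
    rewrite <- (Rmult_1_r (P * w)) at 2. apply Rmult_le_compat_l; [exact hPw |].
    apply poisson_partial_sum_le1. exact hs'.
Qed.

Definition heat_const (be : R) : R := 3 * sqrt 2 * exp (be ^ 2 * exp be / 2).

Lemma heat_kernel_term_eq (t : R) (k m : nat) :
  (t / 2) ^ (2 * k + m) / (INR (fact k) * INR (fact (k + m)))
  = exp t * (poisson (t / 2) k * poisson (t / 2) (k + m)).
Proof.
  unfold poisson. replace (2 * k + m)%nat with (k + (k + m))%nat by lia.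
  rewrite pow_add.
  replace (exp t) with (/ (exp (- (t / 2)) * exp (- (t / 2))))
    by (rewrite <- exp_plus, <- exp_Ropp; f_equal; field).
  pose proof (INR_fact_neq_0 k). pose proof (INR_fact_neq_0 (k + m)).
  pose proof (exp_neq_0 (- (t / 2))).
  field. repeat split; assumption.
Qed.

Lemma heat_kernel_ge0 (t : R) (z : Z) : 0 <= t -> 0 <= heat_kernel t z.
Proof.
  intros ht. unfold heat_kernel. apply Rmult_le_pos; [left; apply exp_pos |].
  apply series_ge0. intros k. apply Rmult_le_pos; [apply pow_le; lra |].
  left. apply Rinv_0_lt_compat, Rmult_lt_0_compat; apply INR_fact_lt_0.
Qed.

Lemma heat_const_pos (be : R) : 0 < heat_const be.
Proof.
  unfold heat_const. apply Rmult_lt_0_compat; [| apply exp_pos].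
  apply Rmult_lt_0_compat; [lra | apply sqrt_lt_R0; lra].
Qed.

Lemma poisson_pair_partial_sum_le_heat_const (be t : R) (m N : nat) : 0 <= be -> 0 <= t ->
  sum_f_R0 (fun k => poisson (t / 2) k * poisson (t / 2) (k + m)) N
  <= heat_const be * min1_invsqrt t * exp (- be * INR m * min1_invsqrt t).
Proof.
  intros hbe ht.
  pose proof (min1_invsqrt_pos t). pose proof (min1_invsqrt_le1 t).
  pose proof (mul_min1_invsqrt_sq_le1 t ht).
  set (M := min1_invsqrt t) in *. set (s := t / 2). set (l := be * M).
  assert (hl : 0 <= l <= be) by (unfold l; nra).
  assert (hP : forall j, poisson (s * exp l) j <= 3 * sqrt 2 * M).
  { intros j. apply poisson_le_min1_invsqrt; [exact ht |].
    pose proof (exp_ineq1_le l). unfold s. nra. }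
  assert (hcosh : s * (exp l + exp (- l) - 2) <= be ^ 2 * exp be / 2).
  { pose proof (exp_add_exp_opp_sub2_le l (proj1 hl)).
    assert (exp l <= exp be) by (apply exp_le_exp; lra).
    assert (0 <= be ^ 2 * exp l) by (apply Rmult_le_pos; [apply pow2_ge_0 | left; apply exp_pos]).
    apply Rle_trans with (s * (l ^ 2 * exp l)); [apply Rmult_le_compat_l; unfold s; lra |].
    replace (s * (l ^ 2 * exp l)) with (t * M ^ 2 * (be ^ 2 * exp l) / 2) by (unfold s, l; field).
    nra. }
  eapply Rle_trans;
    [apply (poisson_pair_partial_sum_le s l (3 * sqrt 2 * M) m N); [unfold s; lra | exact hP] |].
  unfold heat_const. pose proof (sqrt_pos 2).
  replace (3 * sqrt 2 * exp (be ^ 2 * exp be / 2) * M * exp (- be * INR m * M))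
    with (3 * sqrt 2 * M * exp (be ^ 2 * exp be / 2 + - (l * INR m)))
    by (replace (- (l * INR m)) with (- be * INR m * M) by (unfold l; ring);
        rewrite exp_plus; ring).
  apply Rmult_le_compat_l; [nra | apply exp_le_exp; lra].
Qed.

Lemma heat_kernel_le (be t : R) (z : Z) : 0 <= be -> 0 <= t ->
  heat_kernel t z
  <= heat_const be * min1_invsqrt t * exp (- be * Rabs (IZR z) * min1_invsqrt t).
Proof.
  intros hbe ht. unfold heat_kernel. cbv zeta.
  rewrite <- abs_IZR, <- Zabs2Nat.id_abs, <- INR_IZR_INZ. set (m := Z.abs_nat z).
  set (B := heat_const be * min1_invsqrt t * exp (- be * INR m * min1_invsqrt t)).
  assert (hB : 0 <= B).
  { pose proof (heat_const_pos be). pose proof (min1_invsqrt_pos t).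
    pose proof (exp_pos (- be * INR m * min1_invsqrt t)).
    unfold B. apply Rmult_le_pos; [apply Rmult_le_pos |]; lra. }
  replace B with (exp (- t) * (exp t * B))
    by (rewrite <- Rmult_assoc, <- exp_plus, Rplus_opp_l, exp_0; ring).
  apply Rmult_le_compat_l; [left; apply exp_pos |].
  apply series_le; [| pose proof (exp_pos t); nra].
  intros N.
  replace (sum_f_R0 _ N)
    with (exp t * sum_f_R0 (fun k => poisson (t / 2) k * poisson (t / 2) (k + m)) N)
    by (rewrite scal_sum; apply sum_eq; intros k _; rewrite heat_kernel_term_eq; ring).
  apply Rmult_le_compat_l; [left; apply exp_pos |].
  apply poisson_pair_partial_sum_le_heat_const; assumption.
Qed.

Lemma heat_kernel_le_split (b c t D : R) (z : Z) (n : nat) :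
  0 <= b -> 0 <= c -> 0 <= t -> 0 <= D -> D + INR n <= Rabs (IZR z) ->
  heat_kernel t z
  <= heat_const (b + c) * min1_invsqrt t
     * exp (- b * D * min1_invsqrt t) * exp (- c * min1_invsqrt t) ^ n.
Proof.
  intros hb hc ht hD hz.
  pose proof (min1_invsqrt_pos t). pose proof (heat_const_pos (b + c)).
  eapply Rle_trans; [apply (heat_kernel_le (b + c)); [lra | exact ht] |].
  set (M := min1_invsqrt t) in *. set (Z := Rabs (IZR z)) in *.
  rewrite (Rmult_assoc (heat_const (b + c) * M)).
  apply Rmult_le_compat_l; [apply Rmult_le_pos; lra |].
  rewrite exp_pow, <- exp_plus. apply exp_le_exp. pose proof (pos_INR n).
  assert (b * D <= b * Z) by (apply Rmult_le_compat_l; lra).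
  assert (c * INR n <= c * Z) by (apply Rmult_le_compat_l; lra).
  nra.
Qed.

(** * The Robin kernel *)

Lemma Rabs_diff_add_le (x y n : nat) :
  Rabs (INR x - INR y) + INR n <= Rabs (IZR (Z.of_nat x + Z.of_nat y + Z.of_nat n)).
Proof.
  rewrite !plus_IZR, <- !INR_IZR_INZ.
  pose proof (pos_INR x). pose proof (pos_INR y). pose proof (pos_INR n).
  rewrite (Rabs_pos_eq (INR x + INR y + INR n)) by lra.
  assert (Rabs (INR x - INR y) <= INR x + INR y) by (apply Rabs_le; lra).
  lra.
Qed.

Lemma le_sqrt_mul_min1_invsqrt (T eps t : R) :
  0 < eps <= sqrt T -> 0 <= t <= T / eps ^ 2 -> eps <= sqrt T * min1_invsqrt t.
Proof.
  intros he ht. unfold min1_invsqrt. destruct Rle_dec as [ht1 | ht1]; [lra |].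
  assert (hst : 0 < sqrt t) by (apply sqrt_lt_R0; lra).
  assert (sqrt t <= sqrt T / eps).
  { rewrite <- (sqrt_pow2 eps) by lra. rewrite <- sqrt_div_alt by (apply pow_lt; lra).
    apply sqrt_le_1_alt. lra. }
  apply Rmult_le_reg_r with (sqrt t); [exact hst |].
  rewrite Rmult_assoc, Rinv_l by lra.
  apply Rmult_le_reg_r with (/ eps); [apply Rinv_0_lt_compat; lra |].
  replace (eps * sqrt t * / eps) with (sqrt t) by (field; lra). lra.
Qed.

Lemma muA_bounds (A eps : R) :
  0 <= eps -> Rabs A * eps <= 1 / 2 -> 1 / 2 <= muA A eps <= 3 / 2.
Proof.
  intros he hAe. unfold muA.
  pose proof (Rle_abs A). pose proof (Rle_abs (- A)). rewrite Rabs_Ropp in *.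
  split; nra.
Qed.

Lemma series_le_geometric (g : nat -> R) (B q : R) :
  0 <= B -> 0 <= q < 1 -> (forall n, g n <= B * q ^ (n + 2)) -> series g <= B / (1 - q).
Proof.
  intros hB hq hg. assert (h1q : 0 < / (1 - q)) by (apply Rinv_0_lt_compat; lra).
  apply series_le; [| unfold Rdiv; nra].
  intros N. apply Rle_trans with (B * sum_f_R0 (fun n => q ^ n) N).
  - rewrite scal_sum. apply sum_Rle. intros n _.
    rewrite Rmult_comm. eapply Rle_trans; [apply hg |].
    apply Rmult_le_compat_l; [exact hB | apply pow_le_pow_le1; [lra | lia]].
  - rewrite tech3 by lra. unfold Rdiv. rewrite <- Rmult_assoc.
    apply Rmult_le_compat_r; [lra |]. pose proof (pow_le q (S N) (proj1 hq)). nra.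
Qed.

Lemma inv_one_sub_le (q u : R) : 0 < u -> q <= exp (- u) -> / (1 - q) <= (1 + u) / u.
Proof.
  intros hu hq.
  assert (hexp : exp (- u) <= / (1 + u)).
  { rewrite exp_Ropp. apply Rinv_le_contravar; [lra | apply exp_ineq1_le]. }
  assert (hgap : u / (1 + u) <= 1 - q).
  { replace (u / (1 + u)) with (1 - / (1 + u)) by (field; lra). lra. }
  replace ((1 + u) / u) with (/ (u / (1 + u))) by (field; lra).
  apply Rinv_le_contravar; [apply Rdiv_lt_0_compat; lra | exact hgap].
Qed.

Lemma one_sub_inv_sq_bounds (d : R) : 0 <= d -> 0 <= 1 - / (1 + d) ^ 2 <= 2 * d.
Proof.
  intros hd. assert (hpos : 0 < (1 + d) ^ 2) by (apply pow_lt; lra).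
  replace (1 - / (1 + d) ^ 2) with ((2 * d + d ^ 2) / (1 + d) ^ 2) by (field; lra).
  split.
  - apply Rmult_le_pos; [nra | left; apply Rinv_0_lt_compat; exact hpos].
  - apply Rmult_le_reg_r with ((1 + d) ^ 2); [exact hpos |].
    unfold Rdiv. rewrite Rmult_assoc, Rinv_l by lra. nra.
Qed.

Lemma robin_correction_le_mu_ge1 (a eps B r : R) (h : nat -> R) :
  0 <= a -> 0 < eps -> (a + 1) * eps <= 1 / 2 -> 0 <= B ->
  0 <= r <= exp (- (2 * a + 1) * eps) -> (forall n, 0 <= h n <= B * r ^ (n + 2)) ->
  (1 - / (1 + a * eps) ^ 2) * series (fun n => h n * (1 + a * eps) ^ (n + 2)) <= 3 * B.
Proof.
  intros ha he hae hB hr hh.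
  set (mu := 1 + a * eps). set (u := (a + 1) * eps). set (q := mu * r).
  assert (hmu : 1 <= mu <= exp (a * eps)).
  { split; [unfold mu; nra | apply exp_ineq1_le]. }
  assert (hu : 0 < u) by (unfold u; nra).
  assert (hq : 0 <= q <= exp (- u)).
  { unfold q. split; [nra |].
    replace (- u) with (a * eps + - (2 * a + 1) * eps) by (unfold u; ring).
    rewrite exp_plus. apply Rmult_le_compat; lra. }
  assert (hq1 : q < 1).
  { assert (exp (- u) < 1) by (rewrite <- exp_0; apply exp_increasing; lra). lra. }
  assert (hser : series (fun n => h n * mu ^ (n + 2)) <= B * ((1 + u) / u)).
  { eapply Rle_trans; [apply series_le_geometric with (q := q); [exact hB | lra |] |].
    - intros n. unfold q. rewrite Rpow_mult_distr.
      replace (B * (mu ^ (n + 2) * r ^ (n + 2))) with (B * r ^ (n + 2) * mu ^ (n + 2)) by ring.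
      apply Rmult_le_compat_r; [apply pow_le; lra | apply hh].
    - unfold Rdiv. apply Rmult_le_compat_l; [exact hB |].
      apply inv_one_sub_le; [exact hu | exact (proj2 hq)]. }
  destruct (one_sub_inv_sq_bounds (a * eps) ltac:(nra)) as [hc0 hc1]. fold mu in hc0, hc1.
  assert (hratio : 2 * (a * eps) * ((1 + u) / u) <= 3).
  { replace (2 * (a * eps) * ((1 + u) / u)) with (2 * (a / (a + 1)) * (1 + u))
      by (unfold u; field; lra).
    assert (0 <= a / (a + 1) <= 1).
    { split; [apply Rmult_le_pos; [lra | left; apply Rinv_0_lt_compat; lra] |].
      apply Rmult_le_reg_r with (a + 1); [lra |].
      unfold Rdiv. rewrite Rmult_assoc, Rinv_l; lra. }
    unfold u in *. nra. }
  apply Rle_trans with (2 * (a * eps) * (B * ((1 + u) / u))).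
  - apply Rmult_le_compat; [exact hc0 | | exact hc1 | exact hser].
    apply series_ge0. intros n. apply Rmult_le_pos; [apply hh | apply pow_le; lra].
  - nra.
Qed.

Lemma robin_correction_le (A eps B r : R) (h : nat -> R) :
  0 < eps -> (Rabs A + 1) * eps <= 1 / 2 -> 0 <= B ->
  0 <= r <= exp (- (2 * Rabs A + 1) * eps) -> (forall n, 0 <= h n <= B * r ^ (n + 2)) ->
  (1 - / muA A eps ^ 2) * series (fun n => h n * muA A eps ^ (n + 2)) <= 3 * B.
Proof.
  intros he hAe hB hr hh. destruct (Rle_or_lt 0 A) as [hA | hA].
  - assert (hmu : 1 / 2 <= muA A eps <= 1).
    { pose proof (muA_bounds A eps ltac:(lra) ltac:(pose proof (Rabs_pos A); nra)).
      unfold muA in *. split; nra. }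
    assert (hinv : 1 <= / muA A eps ^ 2).
    { rewrite <- Rinv_1. apply Rinv_le_contravar; [apply pow_lt; lra |].
      rewrite <- (pow1 2). apply pow_incr. lra. }
    assert (0 <= series (fun n => h n * muA A eps ^ (n + 2))).
    { apply series_ge0. intros n. apply Rmult_le_pos; [apply hh | apply pow_le; lra]. }
    nra.
  - replace (muA A eps) with (1 + Rabs A * eps)
      by (unfold muA; rewrite Rabs_left by exact hA; ring).
    apply (robin_correction_le_mu_ge1 (Rabs A) eps B r h); try assumption. apply Rabs_pos.
Qed.

Lemma robin_kernel_le (A T b eps t : R) (x y : nat) :
  0 < T -> 0 <= b -> 0 < eps <= sqrt T -> (Rabs A + 1) * eps <= 1 / 2 -> 0 <= t <= T / eps ^ 2 ->
  robin_kernel A eps t x y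
  <= 6 * heat_const (b + (2 * Rabs A + 1) * sqrt T) * min1_invsqrt t
       * exp (- b * Rabs (INR x - INR y) * min1_invsqrt t).
Proof.
  intros hT hb he hae ht.
  pose proof (Rabs_pos A). pose proof (sqrt_lt_R0 T hT). set (a := Rabs A) in *.
  set (c := (2 * a + 1) * sqrt T). assert (hc : 0 <= c) by (unfold c; nra).
  assert (hmu : 1 / 2 <= muA A eps <= 3 / 2) by (apply muA_bounds; [lra | fold a; nra]).
  assert (hM := le_sqrt_mul_min1_invsqrt T eps t he ht).
  pose proof (min1_invsqrt_pos t). pose proof (heat_const_pos (b + c)).
  pose proof (Rabs_pos (INR x - INR y)).
  pose proof (exp_pos (- b * Rabs (INR x - INR y) * min1_invsqrt t)).
  set (M := min1_invsqrt t) in *. set (D := Rabs (INR x - INR y)) in *.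
  set (B := heat_const (b + c) * M * exp (- b * D * M)).
  assert (hB : 0 <= B) by (unfold B; apply Rmult_le_pos; nra).
  assert (h1 : heat_kernel t (Z.of_nat x - Z.of_nat y) <= B).
  { rewrite <- (Rmult_1_r B), <- (pow_O (exp (- c * M))).
    apply heat_kernel_le_split; try lra.
    rewrite minus_IZR, <- !INR_IZR_INZ. fold D. simpl. lra. }
  assert (h2 : heat_kernel t (Z.of_nat x + Z.of_nat y + 1) <= B).
  { rewrite <- (Rmult_1_r B), <- (pow_O (exp (- c * M))).
    apply heat_kernel_le_split; try lra.
    pose proof (Rabs_diff_add_le x y 1) as hxy. fold D in hxy. simpl in hxy |- *. lra. }
  assert (h3 : (1 - / muA A eps ^ 2) * series (fun n =>
      heat_kernel t (Z.of_nat x + Z.of_nat y + Z.of_nat (n + 2)) * muA A eps ^ (n + 2)) <= 3 * B).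
  { apply (robin_correction_le A eps B (exp (- c * M))); [lra | exact hae | exact hB | |].
    - split; [left; apply exp_pos | apply exp_le_exp].
      assert ((2 * a + 1) * eps <= (2 * a + 1) * (sqrt T * M)) by (apply Rmult_le_compat_l; lra).
      unfold c. fold a. lra.
    - intros n. split; [apply heat_kernel_ge0; lra |].
      apply heat_kernel_le_split; try lra.
      pose proof (Rabs_diff_add_le x y (n + 2)) as hxy. fold D in hxy. lra. }
  pose proof (heat_kernel_ge0 t (Z.of_nat x + Z.of_nat y + 1) (proj1 ht)).
  unfold robin_kernel. cbv zeta. unfold B in *. nra.
Qed.

Theorem mainTheorem4 (A T b : R) (hT : 0 < T) (hb : 0 <= b) :
  exists C : R, exists eps0 : R, 0 < eps0 /\
    forall eps : R, 0 < eps < eps0 ->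
    forall t : R, 0 <= t <= T / eps ^ 2 ->
    forall x y : nat,
      robin_kernel A eps t x y
      <= C * min1_invsqrt t
           * exp (- b * Rabs (INR x - INR y) * min1_invsqrt t).
Proof.
  pose proof (Rabs_pos A). pose proof (sqrt_lt_R0 T hT).
  pose proof (Rmin_l (/ (2 * (Rabs A + 1))) (sqrt T)).
  pose proof (Rmin_r (/ (2 * (Rabs A + 1))) (sqrt T)).
  exists (6 * heat_const (b + (2 * Rabs A + 1) * sqrt T)), (Rmin (/ (2 * (Rabs A + 1))) (sqrt T)).
  split; [apply Rmin_pos; [apply Rinv_0_lt_compat; lra | assumption] |].
  intros eps [he0 he1] t ht x y.
  apply robin_kernel_le; try assumption; [lra |].
  replace (1 / 2) with ((Rabs A + 1) * / (2 * (Rabs A + 1))) by (field; lra).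
  apply Rmult_le_compat_l; lra.
Qed.
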